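(* For every 3-periodic of the elliptic billiard, the ratio of the area $A'$ of its outer triangle to its area $A$ is $$\frac{A'}{A}=\frac{2}{JL-4}.$$
   Context: The elliptic billiard is $\mathcal{E}: x^2/a^2+y^2/b^2=1$, $a>b>0$, $c=\sqrt{a^2-b^2}$. A 3-periodic is a triangle $P_1P_2P_3$ inscribed in $\mathcal{E}$ that is a closed billiard trajectory (at each vertex the normal to $\mathcal{E}$ bisects the angle between the two incident sides). Its outer triangle has as sides the tangent lines to $\mathcal{E}$ at $P_1,P_2,P_3$. $L$ is the perimeter (the same for all 3-periodics) and $J$ is Joachimsthal's constant, $J=\frac12\nabla f(P_i)\cdot\hat v>0$ with $f=x^2/a^2+y^2/b^2$ and $\hat v$ the unit direction of the trajectory at $P_i$; explicitly with $\delta=\sqrt{a^4-a^2b^2+b^4}$, $J=\sqrt{2\delta-a^2-b^2}/c^2$ and $L=2(\delta+a^2+b^2)J$. *)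

From Stdlib Require Import Reals.
Open Scope R_scope.

Definition pt := (R * R)%type.

Definition on_ellipse (a b : R) (P : pt) : Prop :=
  (fst P)^2 / a^2 + (snd P)^2 / b^2 = 1.

Definition dist2 (P Q : pt) : R :=
  sqrt ((fst Q - fst P)^2 + (snd Q - snd P)^2).

(* Billiard reflection law at vertex P with incident sides P->Q and P->S:
   the normal n = (1/2) grad f (P) = (x/a^2, y/b^2) bisects the angle QPS,
   i.e. the sum of the unit vectors along PQ and PS is parallel to n. *)
Definition reflects_at (a b : R) (Q P S : pt) : Prop :=
  let ux := (fst Q - fst P) / dist2 P Q in
  let uy := (snd Q - snd P) / dist2 P Q in
  let wx := (fst S - fst P) / dist2 P S in
  let wy := (snd S - snd P) / dist2 P S in
  let nx := fst P / a^2 in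
  let ny := snd P / b^2 in
  (ux + wx) * ny - (uy + wy) * nx = 0.

Definition three_periodic (a b : R) (P1 P2 P3 : pt) : Prop :=
  on_ellipse a b P1 /\ on_ellipse a b P2 /\ on_ellipse a b P3 /\
  P1 <> P2 /\ P2 <> P3 /\ P3 <> P1 /\
  reflects_at a b P3 P1 P2 /\ reflects_at a b P1 P2 P3 /\
  reflects_at a b P2 P3 P1.

(* Intersection of the tangent lines to the ellipse at P and Q:
   the tangent at P is  (xP/a^2) X + (yP/b^2) Y = 1;  solved by Cramer's rule. *)
Definition tangent_meet (a b : R) (P Q : pt) : pt :=
  let p1 := fst P / a^2 in let q1 := snd P / b^2 in
  let p2 := fst Q / a^2 in let q2 := snd Q / b^2 in
  let d := p1 * q2 - p2 * q1 in
  ((q2 - q1) / d, (p1 - p2) / d).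

Definition tri_area (A B C : pt) : R :=
  Rabs ((fst B - fst A) * (snd C - snd A) - (fst C - fst A) * (snd B - snd A)) / 2.

(* Area of the outer triangle of P1P2P3, whose sides are the tangents at
   P1, P2, P3; its vertices are the pairwise intersections of these tangents. *)
Definition outer_area (a b : R) (P1 P2 P3 : pt) : R :=
  tri_area (tangent_meet a b P2 P3) (tangent_meet a b P3 P1) (tangent_meet a b P1 P2).

Definition delta (a b : R) : R := sqrt (a^4 - a^2 * b^2 + b^4).
Definition csq (a b : R) : R := a^2 - b^2.
Definition Jconst (a b : R) : R := sqrt (2 * delta a b - a^2 - b^2) / csq a b.
Definition Lper (a b : R) : R := 2 * (delta a b + a^2 + b^2) * Jconst a b.

From Stdlib Require Import Reals Lra.
From Coquelicot Require Complex.
Open Scope R_scope.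

(* Write the vertices as P_i = (a X_i, b Y_i) with (X_i, Y_i) on the unit circle,
   and put s_ij = X_i X_j + Y_i Y_j, c_ij = X_i X_j - Y_i Y_j (the cosines of the
   difference and of the sum of the eccentric angles).

   1. Joachimsthal's integral: by the reflection law, the quantity
      j = (1/2) grad f(P) . (P - Q) / |PQ| is the same for the three sides.  For a
      chord of the ellipse this quantity is (1 - s)/|PQ|, so every side satisfies
      the chord relation  s - F c = G  with  F = j^2 (a^2 - b^2),  G = 1 - j^2 (a^2 + b^2).
   2. Poncelet-Cayley: in complex coordinates z_i = X_i + i Y_i the chord relation
      is a symmetric biquadratic equation.  Vieta's formulas at a vertex force
      Cayley's condition 2G = F^2 - 1 (the alternative only allows inscribed
      rectangles, which cannot carry three such chords), and then give
      (z1+z2)(z2+z3)(z3+z1) = 2G z1 z2 z3, i.e.  2 prod (1 + s_ij) = G^2.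
   3. Areas: with Dl = det(P2 - P1, P3 - P1) and d_ij = X_i Y_j - X_j Y_i in circle
      coordinates, A = ab|Dl|/2 and A' = ab Dl^2/|d12 d23 d31|/2, whence
      (A'/A)^2 = 2/prod(1 + s_ij) = 4/G^2.
   4. Cayley's condition identifies j^2 with J^2 and gives JL - 4 = -G. *)

Lemma sum_sq_eq0 (x y : R) : x^2 + y^2 = 0 -> x = 0 /\ y = 0.
Proof. rewrite <- !Rsqr_pow2. apply Rplus_sqr_eq_0. Qed.

Lemma dist2_sym (P Q : pt) : dist2 P Q = dist2 Q P.
Proof. unfold dist2. f_equal. ring. Qed.

Lemma dist2_sq (P Q : pt) : dist2 P Q ^ 2 = (fst Q - fst P)^2 + (snd Q - snd P)^2.
Proof.
  unfold dist2. apply pow2_sqrt.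
  pose proof (pow2_ge_0 (fst Q - fst P)). pose proof (pow2_ge_0 (snd Q - snd P)). lra.
Qed.

Lemma unit_direction (x y d : R) : 0 < d -> d^2 = x^2 + y^2 -> (x/d)^2 + (y/d)^2 = 1.
Proof.
  intros Hd E. replace ((x/d)^2 + (y/d)^2) with ((x^2 + y^2)/d^2) by (field; lra).
  rewrite <- E. field. lra.
Qed.

Lemma bisector_projection (ux uy wx wy nx ny : R) :
  ux^2 + uy^2 = 1 -> wx^2 + wy^2 = 1 -> 0 < nx^2 + ny^2 ->
  (ux + wx)*ny - (uy + wy)*nx = 0 ->
  ux*nx + uy*ny = wx*nx + wy*ny \/ (ux + wx = 0 /\ uy + wy = 0).
Proof.
  intros U W Hn Hcross.
  assert (Id : (nx^2 + ny^2)*((ux^2 + uy^2) - (wx^2 + wy^2)) =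
    ((ux - wx)*nx + (uy - wy)*ny)*((ux + wx)*nx + (uy + wy)*ny)
    + ((ux - wx)*ny - (uy - wy)*nx)*((ux + wx)*ny - (uy + wy)*nx)) by ring.
  rewrite U, W, Hcross in Id.
  destruct (Rmult_integral ((ux - wx)*nx + (uy - wy)*ny) ((ux + wx)*nx + (uy + wy)*ny))
    as [Hd|Hs]; [lra | left; lra | right].
  apply sum_sq_eq0.
  assert (Z : (nx^2 + ny^2)*((ux + wx)^2 + (uy + wy)^2) = 0).
  { replace ((nx^2 + ny^2)*((ux + wx)^2 + (uy + wy)^2)) with
      (((ux + wx)*nx + (uy + wy)*ny)^2 + ((ux + wx)*ny - (uy + wy)*nx)^2) by ring.
    rewrite Hs, Hcross. ring. }
  destruct (Rmult_integral _ _ Z); [lra | assumption].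
Qed.

Lemma ellipse_circle_coords (a b : R) (P : pt) : 0 < a -> 0 < b ->
  on_ellipse a b P -> exists X Y, P = (a*X, b*Y) /\ X^2 + Y^2 = 1.
Proof.
  intros Ha Hb HP. destruct P as [x y]. unfold on_ellipse in HP; simpl in HP.
  exists (x/a), (y/b). split.
  - f_equal; field; lra.
  - rewrite <- HP. field; lra.
Qed.

Lemma scaled_neq (a b Xi Yi Xj Yj : R) :
  (a*Xi, b*Yi) <> (a*Xj, b*Yj) -> (Xi, Yi) <> (Xj, Yj).
Proof. intros N E. injection E as -> ->. exact (N eq_refl). Qed.

Lemma circle_gap (Xi Yi Xj Yj : R) : Xi^2 + Yi^2 = 1 -> Xj^2 + Yj^2 = 1 ->
  (Xi, Yi) <> (Xj, Yj) -> 0 < 1 - (Xi*Xj + Yi*Yj).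
Proof.
  intros Ui Uj N.
  assert (E : 2*(1 - (Xi*Xj + Yi*Yj)) = (Xi - Xj)^2 + (Yi - Yj)^2) by lra.
  destruct (Rle_or_lt (1 - (Xi*Xj + Yi*Yj)) 0) as [Hle|Hlt]; [exfalso|exact Hlt].
  pose proof (pow2_ge_0 (Xi - Xj)). pose proof (pow2_ge_0 (Yi - Yj)).
  destruct (sum_sq_eq0 (Xi - Xj) (Yi - Yj)) as [EX EY]; [lra|].
  apply N. f_equal; lra.
Qed.

Lemma circle_antigap (Xi Yi Xj Yj : R) : Xi^2 + Yi^2 = 1 -> Xj^2 + Yj^2 = 1 ->
  0 <= 1 + (Xi*Xj + Yi*Yj).
Proof.
  intros Ui Uj. pose proof (pow2_ge_0 (Xi + Xj)). pose proof (pow2_ge_0 (Yi + Yj)). lra.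
Qed.

Lemma scaled_dist_sq (a b Xi Yi Xj Yj : R) : Xi^2 + Yi^2 = 1 -> Xj^2 + Yj^2 = 1 ->
  dist2 (a*Xi, b*Yi) (a*Xj, b*Yj) ^ 2 =
  (1 - (Xi*Xj + Yi*Yj)) * (a^2*(1 - (Xi*Xj - Yi*Yj)) + b^2*(1 + (Xi*Xj - Yi*Yj))).
Proof.
  intros Ui Uj. rewrite dist2_sq; cbn [fst snd].
  assert (Yi^2 = 1 - Xi^2) by lra. assert (Yj^2 = 1 - Xj^2) by lra.
  ring [H H0].
Qed.

Lemma scaled_dist_pos (a b Xi Yi Xj Yj : R) : 0 < a -> 0 < b ->
  Xi^2 + Yi^2 = 1 -> Xj^2 + Yj^2 = 1 -> (Xi, Yi) <> (Xj, Yj) ->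
  0 < dist2 (a*Xi, b*Yi) (a*Xj, b*Yj).
Proof.
  intros Ha Hb Ui Uj N.
  pose proof (circle_gap _ _ _ _ Ui Uj N) as Gap.
  pose proof (scaled_dist_sq a b _ _ _ _ Ui Uj) as D.
  set (c := Xi*Xj - Yi*Yj) in D.
  assert (Cm : 0 <= 1 - c).
  { pose proof (pow2_ge_0 (Xi - Xj)). pose proof (pow2_ge_0 (Yi + Yj)). unfold c; lra. }
  assert (Cp : 0 <= 1 + c).
  { pose proof (pow2_ge_0 (Xi + Xj)). pose proof (pow2_ge_0 (Yi - Yj)). unfold c; lra. }
  assert (Epos : 0 < a^2*(1 - c) + b^2*(1 + c)).
  { pose proof (pow_lt a 2 Ha). pose proof (pow_lt b 2 Hb).
    destruct (Rle_or_lt c 0); nra. }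
  assert (0 <= dist2 (a*Xi, b*Yi) (a*Xj, b*Yj)) by apply sqrt_pos.
  nra.
Qed.

Lemma ellipse_normal_pos (a b X Y : R) : 0 < a -> 0 < b -> X^2 + Y^2 = 1 ->
  0 < (a*X/a^2)^2 + (b*Y/b^2)^2.
Proof.
  intros Ha Hb U.
  replace ((a*X/a^2)^2 + (b*Y/b^2)^2) with ((X/a)^2 + (Y/b)^2) by (field; lra).
  pose proof (pow2_ge_0 (X/a)). pose proof (pow2_ge_0 (Y/b)).
  destruct (Rle_or_lt ((X/a)^2 + (Y/b)^2) 0) as [Hle|Hlt]; [exfalso|exact Hlt].
  destruct (sum_sq_eq0 (X/a) (Y/b)) as [Ex Ey]; [lra|].
  replace X with (a*(X/a)) in U by (field; lra).
  replace Y with (b*(Y/b)) in U by (field; lra).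
  rewrite Ex, Ey in U. lra.
Qed.

Lemma circle_not_between (XP YP XQ YQ XS YS mu : R) :
  XP^2 + YP^2 = 1 -> XQ^2 + YQ^2 = 1 -> XS^2 + YS^2 = 1 -> 0 < mu ->
  XQ - XP = - mu*(XS - XP) -> YQ - YP = - mu*(YS - YP) -> (XP, YP) = (XS, YS).
Proof.
  intros UP UQ US Hmu EX EY.
  assert (Id : mu*(1 + mu)*((XS - XP)^2 + (YS - YP)^2)
               = (XQ^2 + YQ^2 - (XP^2 + YP^2)) + mu*(XS^2 + YS^2 - (XP^2 + YP^2))).
  { replace XQ with (XP - mu*(XS - XP)) by lra.
    replace YQ with (YP - mu*(YS - YP)) by lra. ring. }
  rewrite UP, UQ, US in Id.
  assert (Z : (XS - XP)^2 + (YS - YP)^2 = 0).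
  { destruct (Rmult_integral (mu*(1 + mu)) ((XS - XP)^2 + (YS - YP)^2)) as [Z|Z];
      [lra | nra | exact Z]. }
  destruct (sum_sq_eq0 _ _ Z). f_equal; lra.
Qed.

(** * Joachimsthal's integral *)

Definition joachimsthal (a b : R) (P Q : pt) : R :=
  (fst P * (fst P - fst Q) / a^2 + snd P * (snd P - snd Q) / b^2) / dist2 P Q.

Lemma joachimsthal_circle (a b Xi Yi Xj Yj : R) : 0 < a -> 0 < b -> Xi^2 + Yi^2 = 1 ->
  joachimsthal a b (a*Xi, b*Yi) (a*Xj, b*Yj) =
  (1 - (Xi*Xj + Yi*Yj)) / dist2 (a*Xi, b*Yi) (a*Xj, b*Yj).
Proof.
  intros Ha Hb Ui. unfold joachimsthal; cbn [fst snd]. f_equal.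
  rewrite <- Ui. field. lra.
Qed.

Lemma joachimsthal_sym (a b Xi Yi Xj Yj : R) : 0 < a -> 0 < b ->
  Xi^2 + Yi^2 = 1 -> Xj^2 + Yj^2 = 1 ->
  joachimsthal a b (a*Xi, b*Yi) (a*Xj, b*Yj) = joachimsthal a b (a*Xj, b*Yj) (a*Xi, b*Yi).
Proof.
  intros Ha Hb Ui Uj. rewrite !joachimsthal_circle by assumption.
  rewrite dist2_sym. f_equal. ring.
Qed.

Lemma joachimsthal_pos (a b Xi Yi Xj Yj : R) : 0 < a -> 0 < b ->
  Xi^2 + Yi^2 = 1 -> Xj^2 + Yj^2 = 1 -> (Xi, Yi) <> (Xj, Yj) ->
  0 < joachimsthal a b (a*Xi, b*Yi) (a*Xj, b*Yj).
Proof.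
  intros Ha Hb Ui Uj N. rewrite joachimsthal_circle by assumption.
  apply Rdiv_lt_0_compat; [apply circle_gap | apply scaled_dist_pos]; assumption.
Qed.

Lemma joachimsthal_reflection (a b XP YP XQ YQ XS YS : R) : 0 < a -> 0 < b ->
  XP^2 + YP^2 = 1 -> XQ^2 + YQ^2 = 1 -> XS^2 + YS^2 = 1 ->
  (XP, YP) <> (XQ, YQ) -> (XP, YP) <> (XS, YS) ->
  reflects_at a b (a*XQ, b*YQ) (a*XP, b*YP) (a*XS, b*YS) ->
  joachimsthal a b (a*XP, b*YP) (a*XQ, b*YQ) = joachimsthal a b (a*XP, b*YP) (a*XS, b*YS).
Proof.
  intros Ha Hb UP UQ US NQ NS Refl.
  pose proof (scaled_dist_pos a b _ _ _ _ Ha Hb UP UQ NQ) as dQp.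
  pose proof (scaled_dist_pos a b _ _ _ _ Ha Hb UP US NS) as dSp.
  pose proof (dist2_sq (a*XP, b*YP) (a*XQ, b*YQ)) as dQ2.
  pose proof (dist2_sq (a*XP, b*YP) (a*XS, b*YS)) as dS2.
  pose proof (ellipse_normal_pos a b XP YP Ha Hb UP) as Hn.
  unfold reflects_at, joachimsthal in *; cbn [fst snd] in *.
  set (dQ := dist2 (a*XP, b*YP) (a*XQ, b*YQ)) in *.
  set (dS := dist2 (a*XP, b*YP) (a*XS, b*YS)) in *.
  destruct (bisector_projection ((a*XQ - a*XP)/dQ) ((b*YQ - b*YP)/dQ)
              ((a*XS - a*XP)/dS) ((b*YS - b*YP)/dS) (a*XP/a^2) (b*YP/b^2)
              (unit_direction _ _ _ dQp dQ2) (unit_direction _ _ _ dSp dS2) Hn Refl)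
    as [Dot | [Ex Ey]].
  - transitivity (- ((a*XQ - a*XP)/dQ*(a*XP/a^2) + (b*YQ - b*YP)/dQ*(b*YP/b^2)));
      [field; lra|].
    rewrite Dot. field. lra.
  - (* opposite directions would put P strictly between Q and S *)
    exfalso. apply NS.
    apply (circle_not_between XP YP XQ YQ XS YS (dQ/dS));
      [assumption .. | apply Rdiv_lt_0_compat; assumption | |].
    + assert (E : XQ - XP + dQ/dS*(XS - XP)
                  = dQ/a * ((a*XQ - a*XP)/dQ + (a*XS - a*XP)/dS)) by (field; lra).
      rewrite Ex in E. lra.
    + assert (E : YQ - YP + dQ/dS*(YS - YP)
                  = dQ/b * ((b*YQ - b*YP)/dQ + (b*YS - b*YP)/dS)) by (field; lra).
      rewrite Ey in E. lra.
Qed.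

(* Along a closed trajectory all three sides carry the same Joachimsthal constant
   (the reflections at two vertices already suffice). *)
Lemma periodic_common_joachimsthal (a b X1 Y1 X2 Y2 X3 Y3 : R) : 0 < a -> 0 < b ->
  X1^2 + Y1^2 = 1 -> X2^2 + Y2^2 = 1 -> X3^2 + Y3^2 = 1 ->
  (X1, Y1) <> (X2, Y2) -> (X2, Y2) <> (X3, Y3) -> (X3, Y3) <> (X1, Y1) ->
  reflects_at a b (a*X3, b*Y3) (a*X1, b*Y1) (a*X2, b*Y2) ->
  reflects_at a b (a*X1, b*Y1) (a*X2, b*Y2) (a*X3, b*Y3) ->
  joachimsthal a b (a*X2, b*Y2) (a*X3, b*Y3) = joachimsthal a b (a*X1, b*Y1) (a*X2, b*Y2) /\
  joachimsthal a b (a*X3, b*Y3) (a*X1, b*Y1) = joachimsthal a b (a*X1, b*Y1) (a*X2, b*Y2).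
Proof.
  intros Ha Hb U1 U2 U3 N12 N23 N31 R1 R2.
  assert (N13 : (X1, Y1) <> (X3, Y3)) by congruence.
  assert (N21 : (X2, Y2) <> (X1, Y1)) by congruence.
  pose proof (joachimsthal_reflection a b _ _ _ _ _ _ Ha Hb U1 U3 U2 N13 N12 R1) as At1.
  pose proof (joachimsthal_reflection a b _ _ _ _ _ _ Ha Hb U2 U1 U3 N21 N23 R2) as At2.
  rewrite (joachimsthal_sym a b X2 Y2 X1 Y1) in At2 by assumption.
  rewrite (joachimsthal_sym a b X3 Y3 X1 Y1) by assumption.
  split; congruence.
Qed.

Definition chord_rel (F G Xi Yi Xj Yj : R) : Prop :=
  (Xi*Xj + Yi*Yj) - F*(Xi*Xj - Yi*Yj) = G.

Lemma chord_rel_sym (F G Xi Yi Xj Yj : R) :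
  chord_rel F G Xi Yi Xj Yj -> chord_rel F G Xj Yj Xi Yi.
Proof. unfold chord_rel. intros H. rewrite <- H. ring. Qed.

(* A chord with Joachimsthal constant j satisfies the chord relation with
   F = j^2 (a^2 - b^2) and G = 1 - j^2 (a^2 + b^2): square j |PQ| = 1 - s and use
   the chord length formula. *)
Lemma chord_of_joachimsthal (a b j Xi Yi Xj Yj : R) : 0 < a -> 0 < b ->
  Xi^2 + Yi^2 = 1 -> Xj^2 + Yj^2 = 1 -> (Xi, Yi) <> (Xj, Yj) ->
  joachimsthal a b (a*Xi, b*Yi) (a*Xj, b*Yj) = j ->
  chord_rel (j^2*(a^2 - b^2)) (1 - j^2*(a^2 + b^2)) Xi Yi Xj Yj.
Proof.
  intros Ha Hb Ui Uj N Hj.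
  rewrite joachimsthal_circle in Hj by assumption.
  pose proof (circle_gap _ _ _ _ Ui Uj N) as Gap.
  pose proof (scaled_dist_pos a b _ _ _ _ Ha Hb Ui Uj N) as dP.
  pose proof (scaled_dist_sq a b _ _ _ _ Ui Uj) as D2.
  set (d := dist2 (a*Xi, b*Yi) (a*Xj, b*Yj)) in *.
  set (s := Xi*Xj + Yi*Yj) in *. set (c := Xi*Xj - Yi*Yj) in *.
  assert (jd : j*d = 1 - s) by (rewrite <- Hj; field; lra).
  assert (E : (1 - s)*(j^2*(a^2*(1 - c) + b^2*(1 + c)) - (1 - s)) = 0).
  { replace ((1 - s)*(j^2*(a^2*(1 - c) + b^2*(1 + c)) - (1 - s)))
      with (j^2*d^2 - (1 - s)^2) by (rewrite D2; ring).
    rewrite <- jd. ring. }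
  destruct (Rmult_integral _ _ E) as [E'|E']; [lra|].
  unfold chord_rel. fold s c. lra.
Qed.

Lemma periodic_chords (a b X1 Y1 X2 Y2 X3 Y3 : R) : 0 < a -> 0 < b ->
  X1^2 + Y1^2 = 1 -> X2^2 + Y2^2 = 1 -> X3^2 + Y3^2 = 1 ->
  (X1, Y1) <> (X2, Y2) -> (X2, Y2) <> (X3, Y3) -> (X3, Y3) <> (X1, Y1) ->
  reflects_at a b (a*X3, b*Y3) (a*X1, b*Y1) (a*X2, b*Y2) ->
  reflects_at a b (a*X1, b*Y1) (a*X2, b*Y2) (a*X3, b*Y3) ->
  exists u, 0 < u /\
    chord_rel (u*(a^2 - b^2)) (1 - u*(a^2 + b^2)) X1 Y1 X2 Y2 /\
    chord_rel (u*(a^2 - b^2)) (1 - u*(a^2 + b^2)) X2 Y2 X3 Y3 /\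
    chord_rel (u*(a^2 - b^2)) (1 - u*(a^2 + b^2)) X3 Y3 X1 Y1.
Proof.
  intros Ha Hb U1 U2 U3 N12 N23 N31 R1 R2.
  destruct (periodic_common_joachimsthal a b X1 Y1 X2 Y2 X3 Y3 Ha Hb U1 U2 U3 N12 N23 N31 R1 R2)
    as [J23 J31].
  pose proof (joachimsthal_pos a b _ _ _ _ Ha Hb U1 U2 N12) as Hj.
  set (j := joachimsthal a b (a*X1, b*Y1) (a*X2, b*Y2)) in J23, J31, Hj.
  exists (j^2). split; [nra|].
  split; [|split]; apply chord_of_joachimsthal; auto.
Qed.

(** * The chord relation in complex coordinates *)

Module ComplexChords.
Import Coquelicot.Complex.
Local Open Scope C_scope.

Lemma Cmult_integral (x y : C) : x * y = 0%R -> x = 0%R \/ y = 0%R.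
Proof.
  intros H. destruct (Ceq_dec x 0%R) as [Hx|Hx]; [now left|right].
  replace y with (/x * (x * y)) by (field; exact Hx). rewrite H. ring.
Qed.

Lemma circle_point_neq0 (X Y : R) : (X^2 + Y^2 = 1)%R -> (X, Y) <> RtoC 0.
Proof. intros U E. injection E as -> ->. lra. Qed.

(* For z, w on the unit circle, chord_poly F G z w = 2 z w (s - F c - G), since
   z^2 + w^2 = 2 s z w and 1 + (z w)^2 = 2 c z w. *)
Definition chord_poly (F G : R) (z w : C) : C :=
  z*z + w*w - F*(1%R + z*w*(z*w)) - 2%R*G*(z*w).

Lemma chord_poly_circle (F G Xi Yi Xj Yj : R) :
  (Xi^2 + Yi^2 = 1)%R -> (Xj^2 + Yj^2 = 1)%R ->
  chord_poly F G (Xi, Yi) (Xj, Yj) =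
  2%R * (Xi, Yi) * (Xj, Yj) * ((Xi*Xj + Yi*Yj) - F*(Xi*Xj - Yi*Yj) - G)%R.
Proof.
  intros Ui Uj. assert (Yi^2 = 1 - Xi^2)%R by lra. assert (Yj^2 = 1 - Xj^2)%R by lra.
  unfold chord_poly. apply injective_projections; simpl; ring [H H0].
Qed.

Lemma chord_poly_of_rel (F G Xi Yi Xj Yj : R) :
  (Xi^2 + Yi^2 = 1)%R -> (Xj^2 + Yj^2 = 1)%R ->
  chord_rel F G Xi Yi Xj Yj -> chord_poly F G (Xi, Yi) (Xj, Yj) = 0%R.
Proof.
  intros Ui Uj H. rewrite chord_poly_circle by assumption.
  unfold chord_rel in H. rewrite H, Rminus_diag. ring.
Qed.

(* For fixed z2, chord_poly z2 y = K y^2 - 2 G z2 y + (z2^2 - F) with K = 1 - F z2^2;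
   two distinct roots z1, z3 obey Vieta's formulas. *)
Lemma chord_vieta (F G : R) (z1 z2 z3 : C) : z1 <> z3 ->
  chord_poly F G z2 z1 = 0%R -> chord_poly F G z2 z3 = 0%R ->
  (1%R - F*(z2*z2))*(z1 + z3) = 2%R*G*z2 /\ (1%R - F*(z2*z2))*(z1*z3) = z2*z2 - F.
Proof.
  intros Hne H1 H3.
  assert (Hd : z1 - z3 <> 0%R).
  { intro E. apply Hne. replace z1 with ((z1 - z3) + z3) by ring. rewrite E. ring. }
  set (K := 1%R - F*(z2*z2)).
  split.
  - assert (E : (z1 - z3) * (K*(z1 + z3) - 2%R*G*z2) = 0%R).
    { replace (RtoC 0) with (chord_poly F G z2 z1 - chord_poly F G z2 z3)
        by (rewrite H1, H3; ring).
      unfold chord_poly, K; ring. }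
    destruct (Cmult_integral _ _ E) as [E'|E']; [contradiction|].
    replace (K*(z1 + z3)) with ((K*(z1 + z3) - 2%R*G*z2) + 2%R*G*z2) by ring.
    rewrite E'. ring.
  - assert (E : (z1 - z3) * (K*(z1*z3) - (z2*z2 - F)) = 0%R).
    { replace (RtoC 0) with (z3 * chord_poly F G z2 z1 - z1 * chord_poly F G z2 z3)
        by (rewrite H1, H3; ring).
      unfold chord_poly, K; ring. }
    destruct (Cmult_integral _ _ E) as [E'|E']; [contradiction|].
    replace (K*(z1*z3)) with ((K*(z1*z3) - (z2*z2 - F)) + (z2*z2 - F)) by ring.
    rewrite E'. ring.
Qed.

(* If moreover z1 z3 is a chord, substituting Vieta's formulas into
   K^2 chord_poly z1 z3 = 0 leaves a factored equation in z2 alone. *)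
Lemma chord_vertex_relation (F G : R) (z1 z2 z3 : C) : z1 <> z3 ->
  chord_poly F G z2 z1 = 0%R -> chord_poly F G z2 z3 = 0%R -> chord_poly F G z1 z3 = 0%R ->
  (2%R*G + 1%R - F*F) * (F*(z2*z2*(z2*z2) + 1%R) + 2%R*(G - 1%R)*(z2*z2)) = 0%R.
Proof.
  intros Hne H21 H23 H13.
  destruct (chord_vieta F G z1 z2 z3 Hne H21 H23) as [Sum Prod].
  set (K := 1%R - F*(z2*z2)) in Sum, Prod.
  transitivity (K*K*chord_poly F G z1 z3); [| rewrite H13; ring].
  replace (K*K*chord_poly F G z1 z3) with
    ((K*(z1 + z3))*(K*(z1 + z3)) - 2%R*K*(K*(z1*z3)) - F*(K*K + (K*(z1*z3))*(K*(z1*z3)))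
     - 2%R*G*K*(K*(z1*z3))) by (unfold chord_poly; ring).
  rewrite Sum, Prod. unfold K. ring.
Qed.

Lemma chord_product (F G : R) (z1 z2 z3 : C) : z1 <> z3 -> 1%R - F*(z2*z2) <> 0%R ->
  (2*G = F^2 - 1)%R -> chord_poly F G z2 z1 = 0%R -> chord_poly F G z2 z3 = 0%R ->
  (z1 + z2)*(z2 + z3)*(z3 + z1) = 2%R*G*(z1*z2*z3).
Proof.
  intros Hne HK Cay H21 H23.
  destruct (chord_vieta F G z1 z2 z3 Hne H21 H23) as [Sum Prod].
  set (K := 1%R - F*(z2*z2)) in *.
  assert (CayC : 2%R*G = F*F - 1%R).
  { apply injective_projections; simpl; lra. }
  assert (Fact : K*(z2*z2) + 2%R*G*(z2*z2) + (z2*z2 - F) = K*(z2*z2 - F)).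
  { replace (2%R*G*(z2*z2)) with ((2%R*G)*(z2*z2)) by ring. rewrite CayC. unfold K. ring. }
  assert (D : K*K*((z1 + z2)*(z2 + z3)*(z3 + z1) - 2%R*G*(z1*z2*z3)) = 0%R).
  { replace (K*K*((z1 + z2)*(z2 + z3)*(z3 + z1) - 2%R*G*(z1*z2*z3))) with
      ((K*(z2*z2) + z2*(K*(z1 + z3)) + K*(z1*z3))*(K*(z1 + z3))
       - 2%R*G*z2*K*(K*(z1*z3))) by ring.
    rewrite Sum, Prod.
    replace (K*(z2*z2) + z2*(2%R*G*z2) + (z2*z2 - F)) with (K*(z2*z2 - F))
      by (rewrite <- Fact; ring).
    ring. }
  destruct (Cmult_integral _ _ D) as [D'|D'].
  - destruct (Cmult_integral _ _ D'); contradiction.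
  - replace ((z1 + z2)*(z2 + z3)*(z3 + z1)) with
      (((z1 + z2)*(z2 + z3)*(z3 + z1) - 2%R*G*(z1*z2*z3)) + 2%R*G*(z1*z2*z3)) by ring.
    rewrite D'. ring.
Qed.

(* Real form of chord_vertex_relation (divide by z2^2 and take real parts):
   either Cayley's condition holds or F cos(2 θ2) = 1 - G. *)
Lemma vertex_relation (F G X1 Y1 X2 Y2 X3 Y3 : R) :
  (X1^2 + Y1^2 = 1)%R -> (X2^2 + Y2^2 = 1)%R -> (X3^2 + Y3^2 = 1)%R -> (X1, Y1) <> (X3, Y3) ->
  chord_rel F G X2 Y2 X1 Y1 -> chord_rel F G X2 Y2 X3 Y3 -> chord_rel F G X1 Y1 X3 Y3 ->
  ((2*G + 1 - F^2) * (F*(X2^2 - Y2^2) + G - 1) = 0)%R.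
Proof.
  intros U1 U2 U3 N13 C21 C23 C13.
  pose proof (chord_vertex_relation F G (X1, Y1) (X2, Y2) (X3, Y3) N13
    (chord_poly_of_rel _ _ _ _ _ _ U2 U1 C21) (chord_poly_of_rel _ _ _ _ _ _ U2 U3 C23)
    (chord_poly_of_rel _ _ _ _ _ _ U1 U3 C13)) as V.
  assert (Y2^2 = 1 - X2^2)%R by lra.
  assert (E : (2%R*G + 1%R - F*F) * (F*((X2, Y2)*(X2, Y2)*((X2, Y2)*(X2, Y2)) + 1%R)
                + 2%R*(G - 1%R)*((X2, Y2)*(X2, Y2)))
            = (X2, Y2)*(X2, Y2)*RtoC (2*((2*G + 1 - F^2) * (F*(X2^2 - Y2^2) + G - 1)))%R).
  { apply injective_projections; simpl; ring [H]. }
  rewrite E in V.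
  assert (Z2 : (X2, Y2)*(X2, Y2) <> RtoC 0).
  { intro Z. destruct (Cmult_integral _ _ Z) as [W|W]; exact (circle_point_neq0 _ _ U2 W). }
  destruct (Cmult_integral _ _ V) as [Z|Z]; [contradiction|].
  injection Z as Z. lra.
Qed.

(* Real form of chord_product (take squared moduli, |z_i + z_j|^2 = 2(1 + s_ij)). *)
Lemma product_relation (F G X1 Y1 X2 Y2 X3 Y3 : R) :
  (X1^2 + Y1^2 = 1)%R -> (X2^2 + Y2^2 = 1)%R -> (X3^2 + Y3^2 = 1)%R -> (X1, Y1) <> (X3, Y3) ->
  (0 < F < 1)%R -> (2*G = F^2 - 1)%R ->
  chord_rel F G X2 Y2 X1 Y1 -> chord_rel F G X2 Y2 X3 Y3 ->
  (2*((1 + (X1*X2 + Y1*Y2))*(1 + (X2*X3 + Y2*Y3))*(1 + (X3*X1 + Y3*Y1))) = G^2)%R.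
Proof.
  intros U1 U2 U3 N13 HF Cay C21 C23.
  (* K = 1 - F z2^2 cannot vanish since |F z2^2| = F < 1 *)
  assert (HK : 1%R - F*((X2, Y2)*(X2, Y2)) <> 0%R).
  { intro E. injection E as E1 _.
    assert (X2*X2 - Y2*Y2 <= 1)%R by nra. nra. }
  pose proof (chord_product F G (X1, Y1) (X2, Y2) (X3, Y3) N13 HK Cay
    (chord_poly_of_rel _ _ _ _ _ _ U2 U1 C21) (chord_poly_of_rel _ _ _ _ _ _ U2 U3 C23)) as HV.
  apply (f_equal (fun z => fst (z * Cconj z))) in HV. simpl in HV.
  assert (Y1^2 = 1 - X1^2)%R by lra. assert (Y2^2 = 1 - X2^2)%R by lra.
  assert (Y3^2 = 1 - X3^2)%R by lra.
  match type of HV with ?l = ?r =>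
    assert (Lhs : l = (8*((1 + (X1*X2 + Y1*Y2))*(1 + (X2*X3 + Y2*Y3))*(1 + (X3*X1 + Y3*Y1))))%R)
      by ring [H H0 H1];
    assert (Rhs : r = (4*G^2)%R) by ring [H H0 H1] end.
  lra.
Qed.

End ComplexChords.

Import ComplexChords.

(** * Cayley's condition *)

Lemma sq_eq_cases (x y : R) : y^2 = x^2 -> y = x \/ y = - x.
Proof.
  intros H. assert (E : (y - x)*(y + x) = 0) by lra.
  destruct (Rmult_integral _ _ E); [left|right]; lra.
Qed.

(* Three distinct points among the vertices (±X, ±Y) of an inscribed rectangle
   cannot be pairwise joined by chords of one family: two of the chords are
   symmetric pairs and the third a diameter, which forces F^2 = 1 and X Y = 0. *)
Lemma rectangle_contra (F G X1 Y1 X2 Y2 X3 Y3 : R) : X1^2 + Y1^2 = 1 ->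
  X2^2 = X1^2 -> Y2^2 = Y1^2 -> X3^2 = X1^2 -> Y3^2 = Y1^2 ->
  (X1, Y1) <> (X2, Y2) -> (X2, Y2) <> (X3, Y3) -> (X3, Y3) <> (X1, Y1) ->
  chord_rel F G X1 Y1 X2 Y2 -> chord_rel F G X2 Y2 X3 Y3 -> chord_rel F G X3 Y3 X1 Y1 ->
  False.
Proof.
  intros U1 EX2 EY2 EX3 EY3 N12 N23 N31 C12 C23 C31.
  unfold chord_rel in *.
  destruct (sq_eq_cases _ _ EX2) as [->| ->]; destruct (sq_eq_cases _ _ EY2) as [->| ->];
  destruct (sq_eq_cases _ _ EX3) as [->| ->]; destruct (sq_eq_cases _ _ EY3) as [->| ->];
  try congruence;
  (destruct (Req_dec X1 0) as [->|X0]; [rewrite ?Ropp_0 in *; congruence|]);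
  (destruct (Req_dec Y1 0) as [->|Y0]; [rewrite ?Ropp_0 in *; congruence|]);
  pose proof (Rsqr_pos_lt X1 X0); pose proof (Rsqr_pos_lt Y1 Y0); unfold Rsqr in *; nra.
Qed.

Lemma cayley_condition (F G X1 Y1 X2 Y2 X3 Y3 : R) :
  X1^2 + Y1^2 = 1 -> X2^2 + Y2^2 = 1 -> X3^2 + Y3^2 = 1 ->
  (X1, Y1) <> (X2, Y2) -> (X2, Y2) <> (X3, Y3) -> (X3, Y3) <> (X1, Y1) -> 0 < F ->
  chord_rel F G X1 Y1 X2 Y2 -> chord_rel F G X2 Y2 X3 Y3 -> chord_rel F G X3 Y3 X1 Y1 ->
  2*G = F^2 - 1.
Proof.
  intros U1 U2 U3 N12 N23 N31 HF C12 C23 C31.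
  assert (N13 : (X1, Y1) <> (X3, Y3)) by congruence.
  pose proof (chord_rel_sym _ _ _ _ _ _ C12) as C21.
  pose proof (chord_rel_sym _ _ _ _ _ _ C23) as C32.
  pose proof (chord_rel_sym _ _ _ _ _ _ C31) as C13.
  pose proof (vertex_relation F G X2 Y2 X1 Y1 X3 Y3 U2 U1 U3 N23 C12 C13 C23) as V1.
  pose proof (vertex_relation F G X1 Y1 X2 Y2 X3 Y3 U1 U2 U3 N13 C21 C23 C13) as V2.
  pose proof (vertex_relation F G X1 Y1 X3 Y3 X2 Y2 U1 U3 U2 N12 C31 C32 C12) as V3.
  destruct (Req_dec (2*G + 1 - F^2) 0) as [Z|NZ]; [lra|exfalso].
  (* otherwise cos(2 θ_i) = (1 - G)/F at every vertex *)
  assert (Same : forall X Y, (2*G + 1 - F^2) * (F*(X^2 - Y^2) + G - 1) = 0 ->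
                 X^2 - Y^2 = (1 - G)/F).
  { intros X Y V. destruct (Rmult_integral _ _ V) as [V'|V']; [contradiction|].
    apply (Rmult_eq_reg_l F); [|lra].
    replace (F * ((1 - G)/F)) with (1 - G) by (field; lra). lra. }
  apply Same in V1, V2, V3.
  apply (rectangle_contra F G X1 Y1 X2 Y2 X3 Y3); (assumption || lra).
Qed.

Lemma poncelet_three_chords (F G X1 Y1 X2 Y2 X3 Y3 : R) :
  X1^2 + Y1^2 = 1 -> X2^2 + Y2^2 = 1 -> X3^2 + Y3^2 = 1 ->
  (X1, Y1) <> (X2, Y2) -> (X2, Y2) <> (X3, Y3) -> (X3, Y3) <> (X1, Y1) ->
  0 < F -> G < 1 - F ->
  chord_rel F G X1 Y1 X2 Y2 -> chord_rel F G X2 Y2 X3 Y3 -> chord_rel F G X3 Y3 X1 Y1 ->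
  2*G = F^2 - 1 /\ G < 0 /\
  2*((1 + (X1*X2 + Y1*Y2))*(1 + (X2*X3 + Y2*Y3))*(1 + (X3*X1 + Y3*Y1))) = G^2.
Proof.
  intros U1 U2 U3 N12 N23 N31 HF HG C12 C23 C31.
  pose proof (cayley_condition F G _ _ _ _ _ _ U1 U2 U3 N12 N23 N31 HF C12 C23 C31) as Cay.
  assert (F1 : F < 1) by nra.
  split; [exact Cay | split; [nra|]].
  apply (product_relation F G X1 Y1 X2 Y2 X3 Y3 U1 U2 U3); [congruence | lra | exact Cay | |].
  - exact (chord_rel_sym _ _ _ _ _ _ C12).
  - exact C23.
Qed.

(** * Areas of the inner and outer triangles *)

Lemma tri_area_scaled (a b X1 Y1 X2 Y2 X3 Y3 : R) : 0 < a -> 0 < b ->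
  tri_area (a*X1, b*Y1) (a*X2, b*Y2) (a*X3, b*Y3) =
  a*b * Rabs ((X2 - X1)*(Y3 - Y1) - (X3 - X1)*(Y2 - Y1)) / 2.
Proof.
  intros Ha Hb. unfold tri_area; cbn [fst snd].
  replace ((a*X2 - a*X1)*(b*Y3 - b*Y1) - (a*X3 - a*X1)*(b*Y2 - b*Y1))
    with ((a*b)*((X2 - X1)*(Y3 - Y1) - (X3 - X1)*(Y2 - Y1))) by ring.
  rewrite Rabs_mult, (Rabs_pos_eq (a*b)) by nra. reflexivity.
Qed.

(* The tangents at the ellipse points i and j meet at the image of the pole of the
   chord ij of the circle. *)
Lemma tangent_meet_scaled (a b Xi Yi Xj Yj : R) : 0 < a -> 0 < b ->
  Xi*Yj - Xj*Yi <> 0 ->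
  tangent_meet a b (a*Xi, b*Yi) (a*Xj, b*Yj) =
  (a*((Yj - Yi)/(Xi*Yj - Xj*Yi)), b*((Xi - Xj)/(Xi*Yj - Xj*Yi))).
Proof.
  intros Ha Hb D. unfold tangent_meet; cbn [fst snd].
  f_equal; field; repeat split; lra.
Qed.

Lemma outer_area_scaled (a b X1 Y1 X2 Y2 X3 Y3 : R) : 0 < a -> 0 < b ->
  X1*Y2 - X2*Y1 <> 0 -> X2*Y3 - X3*Y2 <> 0 -> X3*Y1 - X1*Y3 <> 0 ->
  outer_area a b (a*X1, b*Y1) (a*X2, b*Y2) (a*X3, b*Y3) =
  a*b * Rabs (((X2 - X1)*(Y3 - Y1) - (X3 - X1)*(Y2 - Y1))^2
              / ((X1*Y2 - X2*Y1)*(X2*Y3 - X3*Y2)*(X3*Y1 - X1*Y3))) / 2.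
Proof.
  intros Ha Hb D12 D23 D31. unfold outer_area.
  rewrite !tangent_meet_scaled, tri_area_scaled by assumption.
  do 3 f_equal. field. repeat split; assumption.
Qed.

Lemma circle_cross_sq (Xi Yi Xj Yj : R) : Xi^2 + Yi^2 = 1 -> Xj^2 + Yj^2 = 1 ->
  (Xi*Yj - Xj*Yi)^2 = (1 - (Xi*Xj + Yi*Yj)) * (1 + (Xi*Xj + Yi*Yj)).
Proof.
  intros Ui Uj. assert (Yi^2 = 1 - Xi^2) by lra. assert (Yj^2 = 1 - Xj^2) by lra.
  ring [H H0].
Qed.

(* Twice the area of an inscribed triangle of the unit circle, squared:
   Dl^2 = |P1P2|^2 |P2P3|^2 |P3P1|^2 / 4 = 2 prod (1 - s_ij). *)
Lemma circle_det_sq (X1 Y1 X2 Y2 X3 Y3 : R) :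
  X1^2 + Y1^2 = 1 -> X2^2 + Y2^2 = 1 -> X3^2 + Y3^2 = 1 ->
  ((X2 - X1)*(Y3 - Y1) - (X3 - X1)*(Y2 - Y1))^2 =
  2 * (1 - (X1*X2 + Y1*Y2)) * (1 - (X2*X3 + Y2*Y3)) * (1 - (X3*X1 + Y3*Y1)).
Proof.
  intros U1 U2 U3. assert (Y1^2 = 1 - X1^2) by lra. assert (Y2^2 = 1 - X2^2) by lra.
  assert (Y3^2 = 1 - X3^2) by lra. ring [H H0 H1].
Qed.

Lemma area_ratio_scaled (a b X1 Y1 X2 Y2 X3 Y3 : R) : 0 < a -> 0 < b ->
  X1*Y2 - X2*Y1 <> 0 -> X2*Y3 - X3*Y2 <> 0 -> X3*Y1 - X1*Y3 <> 0 ->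
  (X2 - X1)*(Y3 - Y1) - (X3 - X1)*(Y2 - Y1) <> 0 ->
  outer_area a b (a*X1, b*Y1) (a*X2, b*Y2) (a*X3, b*Y3)
    / tri_area (a*X1, b*Y1) (a*X2, b*Y2) (a*X3, b*Y3) =
  Rabs ((X2 - X1)*(Y3 - Y1) - (X3 - X1)*(Y2 - Y1))
    / Rabs ((X1*Y2 - X2*Y1)*(X2*Y3 - X3*Y2)*(X3*Y1 - X1*Y3)).
Proof.
  intros Ha Hb D12 D23 D31 HDl.
  rewrite outer_area_scaled, tri_area_scaled by assumption.
  set (Dl := (X2 - X1)*(Y3 - Y1) - (X3 - X1)*(Y2 - Y1)) in *.
  set (D := (X1*Y2 - X2*Y1)*(X2*Y3 - X3*Y2)*(X3*Y1 - X1*Y3)).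
  assert (DlP : 0 < Rabs Dl) by (apply Rabs_pos_lt; exact HDl).
  assert (DP : 0 < Rabs D).
  { apply Rabs_pos_lt. unfold D. repeat apply Rmult_integral_contrapositive_currified;
      assumption. }
  assert (AbsQ : Rabs (Dl^2 / D) = Rabs Dl ^ 2 / Rabs D).
  { unfold Rdiv. rewrite Rabs_mult, Rabs_inv, (Rabs_pos_eq (Dl^2)) by apply pow2_ge_0.
    now rewrite pow2_abs. }
  rewrite AbsQ. field. repeat split; nra.
Qed.

(* With the product relation 2 prod (1 + s_ij) = G^2, G < 0, the square of the
   ratio is Dl^2/(d12 d23 d31)^2 = 2/prod(1 + s_ij) = 4/G^2. *)
Lemma area_ratio_circle (a b G X1 Y1 X2 Y2 X3 Y3 : R) : 0 < a -> 0 < b ->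
  X1^2 + Y1^2 = 1 -> X2^2 + Y2^2 = 1 -> X3^2 + Y3^2 = 1 ->
  (X1, Y1) <> (X2, Y2) -> (X2, Y2) <> (X3, Y3) -> (X3, Y3) <> (X1, Y1) -> G < 0 ->
  2 * ((1 + (X1*X2 + Y1*Y2)) * (1 + (X2*X3 + Y2*Y3)) * (1 + (X3*X1 + Y3*Y1))) = G^2 ->
  outer_area a b (a*X1, b*Y1) (a*X2, b*Y2) (a*X3, b*Y3)
    / tri_area (a*X1, b*Y1) (a*X2, b*Y2) (a*X3, b*Y3) = 2 / (- G).
Proof.
  intros Ha Hb U1 U2 U3 N12 N23 N31 HG Prod.
  pose proof (circle_gap _ _ _ _ U1 U2 N12) as g12.
  pose proof (circle_gap _ _ _ _ U2 U3 N23) as g23.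
  pose proof (circle_gap _ _ _ _ U3 U1 N31) as g31.
  pose proof (circle_antigap _ _ _ _ U1 U2) as h12.
  pose proof (circle_antigap _ _ _ _ U2 U3) as h23.
  pose proof (circle_antigap _ _ _ _ U3 U1) as h31.
  pose proof (circle_cross_sq _ _ _ _ U1 U2) as D12.
  pose proof (circle_cross_sq _ _ _ _ U2 U3) as D23.
  pose proof (circle_cross_sq _ _ _ _ U3 U1) as D31.
  pose proof (circle_det_sq _ _ _ _ _ _ U1 U2 U3) as Det.
  set (s12 := X1*X2 + Y1*Y2) in *. set (s23 := X2*X3 + Y2*Y3) in *.
  set (s31 := X3*X1 + Y3*Y1) in *.
  (* no two vertices are antipodal, since prod (1 + s_ij) = G^2/2 > 0 *)
  assert (G2 : 0 < G^2) by nra.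
  assert (p12 : 0 < 1 + s12).
  { destruct h12 as [p|e]; [exact p|rewrite <- e in Prod; lra]. }
  assert (p23 : 0 < 1 + s23).
  { destruct h23 as [p|e]; [exact p|rewrite <- e in Prod; lra]. }
  assert (p31 : 0 < 1 + s31).
  { destruct h31 as [p|e]; [exact p|rewrite <- e in Prod; lra]. }
  assert (nz : forall x, 0 < x^2 -> x <> 0) by (intros x Hx E; rewrite E in Hx; lra).
  rewrite area_ratio_scaled
    by (assumption || (apply nz; first [rewrite D12 | rewrite D23 | rewrite D31 | rewrite Det];
        repeat apply Rmult_lt_0_compat; lra)).
  set (Dl := (X2 - X1)*(Y3 - Y1) - (X3 - X1)*(Y2 - Y1)) in *.
  set (D := (X1*Y2 - X2*Y1)*(X2*Y3 - X3*Y2)*(X3*Y1 - X1*Y3)).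
  assert (D2 : D^2 = (1 - s12)*(1 + s12)*((1 - s23)*(1 + s23))*((1 - s31)*(1 + s31)))
    by (unfold D; rewrite <- D12, <- D23, <- D31; ring).
  assert (DP : 0 < Rabs D).
  { apply Rabs_pos_lt, nz. rewrite D2. repeat apply Rmult_lt_0_compat; lra. }
  assert (DlP : 0 < Rabs Dl).
  { apply Rabs_pos_lt, nz. rewrite Det. repeat apply Rmult_lt_0_compat; lra. }
  apply Rsqr_inj; [apply Rlt_le, Rdiv_lt_0_compat; lra .. |].
  rewrite !Rsqr_pow2.
  replace ((Rabs Dl / Rabs D)^2) with (Dl^2 / D^2)
    by (rewrite <- (pow2_abs Dl), <- (pow2_abs D); field; lra).
  rewrite Det, D2.
  transitivity (2 / ((1 + s12)*(1 + s23)*(1 + s31))); [field; lra|].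
  replace ((1 + s12)*(1 + s23)*(1 + s31)) with (G^2/2) by lra.
  field. lra.
Qed.

(* If u > 0 satisfies Cayley's condition for F = u c^2, G = 1 - u(a^2 + b^2), i.e.
   c^4 u^2 + 2(a^2 + b^2) u - 3 = 0, then delta = (c^4 u + a^2 + b^2)/2, J^2 = u and
   J L - 4 = -G. *)
Lemma Jconst_Lper_of_cayley (a b u : R) : 0 < b -> b < a -> 0 < u ->
  2*(1 - u*(a^2 + b^2)) = (u*(a^2 - b^2))^2 - 1 ->
  Jconst a b * Lper a b - 4 = - (1 - u*(a^2 + b^2)).
Proof.
  intros Hb Hab Hu Cay.
  assert (Hc : 0 < a^2 - b^2) by nra.
  assert (Hd : delta a b = ((a^2 - b^2)^2*u + (a^2 + b^2))/2).
  { assert (E : a^4 - a^2*b^2 + b^4 = (((a^2 - b^2)^2*u + (a^2 + b^2))/2)^2).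
    { transitivity ((a^4 - a^2*b^2 + b^4)
        + (a^2 - b^2)^2 * ((u*(a^2 - b^2))^2 - 1 - 2*(1 - u*(a^2 + b^2)))/4).
      - rewrite <- Cay. field.
      - field. }
    unfold delta. rewrite E. apply sqrt_pow2.
    pose proof (pow2_ge_0 (a^2 - b^2)). pose proof (pow2_ge_0 a). pose proof (pow2_ge_0 b).
    nra. }
  assert (HJ : Jconst a b ^ 2 = u).
  { unfold Jconst, csq. rewrite Hd.
    replace (2 * (((a^2 - b^2)^2*u + (a^2 + b^2))/2) - a^2 - b^2) with ((a^2 - b^2)^2*u)
      by field.
    assert (Hx : 0 <= (a^2 - b^2)^2*u) by (pose proof (pow2_ge_0 (a^2 - b^2)); nra).
    replace ((sqrt ((a^2 - b^2)^2*u) / (a^2 - b^2))^2)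
      with (sqrt ((a^2 - b^2)^2*u) ^ 2 / (a^2 - b^2)^2) by (field; lra).
    rewrite pow2_sqrt by exact Hx. field. lra. }
  unfold Lper.
  replace (Jconst a b * (2 * (delta a b + a^2 + b^2) * Jconst a b) - 4)
    with (2 * (delta a b + a^2 + b^2) * Jconst a b ^ 2 - 4) by ring.
  rewrite HJ, Hd. lra.
Qed.

Theorem mainTheorem9 (a b : R) (P1 P2 P3 : pt) :
  0 < b -> b < a ->
  three_periodic a b P1 P2 P3 ->
  outer_area a b P1 P2 P3 / tri_area P1 P2 P3 = 2 / (Jconst a b * Lper a b - 4).
Proof.
  intros Hb Hab (E1 & E2 & E3 & N12 & N23 & N31 & R1 & R2 & _).
  assert (Ha : 0 < a) by lra.
  destruct (ellipse_circle_coords a b P1 Ha Hb E1) as (X1 & Y1 & -> & U1).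
  destruct (ellipse_circle_coords a b P2 Ha Hb E2) as (X2 & Y2 & -> & U2).
  destruct (ellipse_circle_coords a b P3 Ha Hb E3) as (X3 & Y3 & -> & U3).
  apply scaled_neq in N12, N23, N31.
  destruct (periodic_chords a b X1 Y1 X2 Y2 X3 Y3 Ha Hb U1 U2 U3 N12 N23 N31 R1 R2)
    as (u & Hu & C12 & C23 & C31).
  set (F := u*(a^2 - b^2)) in C12, C23, C31.
  set (G := 1 - u*(a^2 + b^2)) in C12, C23, C31.
  assert (HF : 0 < F) by (assert (0 < a^2 - b^2) by nra; unfold F; nra).
  assert (HFG : G < 1 - F) by (assert (0 < b^2) by nra; unfold F, G; nra).
  destruct (poncelet_three_chords F G X1 Y1 X2 Y2 X3 Y3 U1 U2 U3 N12 N23 N31 HF HFG C12 C23 C31)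
    as (Cay & HG & Prod).
  rewrite (area_ratio_circle a b G _ _ _ _ _ _ Ha Hb U1 U2 U3 N12 N23 N31 HG Prod).
  rewrite (Jconst_Lper_of_cayley a b u Hb Hab Hu Cay).
  reflexivity.
Qed.
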